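(* There is a universal constant $K_0\le 4$ such that for any two independent real random variables $X,Y$ with finite second moments, \[ \operatorname{Var}|X+Y| \;\ge\; \frac{\max\{\operatorname{Var}|X+\mathbb{E}Y|,\ \operatorname{Var}|Y+\mathbb{E}X|\}}{K_0}. \]
   Context: $\operatorname{Var} Z=\mathbb{E}[Z^2]-(\mathbb{E}Z)^2$. *)

From HB Require Import structures.
From mathcomp Require Import all_boot all_order all_algebra.
From mathcomp Require Import all_classical all_reals all_analysis.
Set Implicit Arguments. Unset Strict Implicit. Unset Printing Implicit Defensive.
Import Order.TTheory GRing.Theory Num.Theory.
Local Open Scope classical_set_scope.
Local Open Scope ring_scope.

Definition independent_RV2 {d} {T : measurableType d} {R : realType}
  (P : probability T R) (X Y : {RV P >-> R}) : Prop :=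
  forall A B : set R, measurable A -> measurable B ->
    P (X @^-1` A `&` Y @^-1` B) = (P (X @^-1` A) * P (Y @^-1` B))%E.

From HB Require Import structures.
From mathcomp Require Import all_boot all_order all_algebra.
From mathcomp Require Import all_classical all_reals all_analysis.
From mathcomp Require Import measurable_realfun ring lra.
Import Order.TTheory GRing.Theory Num.Theory.
Set Implicit Arguments. Unset Strict Implicit. Unset Printing Implicit Defensive.
Local Open Scope classical_set_scope.
Local Open Scope ring_scope.

(* Let m = E Y, H x = E|x + Y| and G x = E|x + Y|^2.  By independence,
   Var|X + Y| = E G(X) - (E H(X))^2, so integrating over two independent
   copies x, x' of X reduces Var|X + m| <= 4 Var|X + Y| to the pointwise bound
     (|x + m| - |x' + m|)^2 <= 4 (G x + G x' - 2 H x H x').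
   For x' <= x put U = |x + Y|, V = |x' + Y| and d = x - x'; the right-hand
   side is 2 (E(U - V))^2 + 2 (E(U - V)^2 + Var(U + V)).  Since U - V is
   2Y + x + x' clamped to [-d, d] while U + V = max(|2Y + x + x'|, d), we get
   |2m + x + x' - E(U - V)| <= E(U + V) - d and
   E(U - V)^2 + Var(U + V) >= min(d^2, (E(U + V) - d)^2); together with
   |x + m| - |x' + m| <= min(d, |2m + x + x'|) this gives the bound. *)

Section independent_pair.
Context d (T : measurableType d) (R : realType) (P : probability T R)
  (X Y : {RV P >-> R}).

Lemma independent_RV2_sym : independent_RV2 X Y -> independent_RV2 Y X.
Proof. by move=> iXY A B mA mB; rewrite setIC iXY // muleC. Qed.

Definition rv_pair (w : T) := (X w, Y w).

Lemma measurable_rv_pair : measurable_fun setT rv_pair.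
Proof. exact: measurable_fun_pair. Qed.

HB.instance Definition _ :=
  isMeasurableFun.Build _ _ _ _ rv_pair measurable_rv_pair.

Lemma independent_RV2_distribution_pair : independent_RV2 X Y ->
  forall A, measurable A ->
  (distribution P X \x distribution P Y)%E A = distribution P rv_pair A.
Proof. by move=> iXY; apply: product_measure_unique => A B mA mB; exact: iXY. Qed.

Lemma ge0_integral_independent (f : (R * R)%type -> \bar R) : independent_RV2 X Y ->
  measurable_fun setT f -> (forall z, (0 <= f z)%E) ->
  (\int[P]_w f (X w, Y w) =
   \int[distribution P X]_x \int[distribution P Y]_y f (x, y))%E.
Proof.
move=> iXY mf f0.
rewrite -[RHS](fubini_tonelli1 f) // -[LHS](ge0_integral_distribution rv_pair) //.
apply: eq_measure_integral => A mA _.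
by symmetry; exact: independent_RV2_distribution_pair.
Qed.

End independent_pair.

Import numFieldNormedType.Exports.

(* Growth bounds give integrability against any law with a finite second
   moment; the tactic [growth] below discharges these side conditions. *)
Section growth.
Context (R : realType).
Implicit Types (f g : R -> R) (c k : R).

Definition linear_growth f :=
  measurable_fun setT f /\ exists c, forall y, `|f y| <= c * (1 + `|y|).

Definition quadratic_growth f :=
  measurable_fun setT f /\ exists c, forall y, `|f y| <= c * (1 + y ^+ 2).

Lemma linear_growth_cst c : linear_growth (fun=> c).
Proof.
split; first exact: measurable_cst.
by exists `|c| => y; rewrite ler_peMr// lerDl.
Qed.

Lemma linear_growth_id : linear_growth id.
Proof. by split; [exact: measurable_id | exists 1 => y; rewrite mul1r lerDr]. Qed.

Lemma linear_growthD f g :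
  linear_growth f -> linear_growth g -> linear_growth (fun y => f y + g y).
Proof.
move=> [mf [c cf]] [mg [c' cg]]; split; first exact: measurable_funD.
exists (c + c') => y; rewrite mulrDl (le_trans (ler_normD _ _))//.
exact: lerD.
Qed.

Lemma linear_growthZ k f : linear_growth f -> linear_growth (fun y => k * f y).
Proof.
move=> [mf [c cf]]; split; first exact: measurable_funM.
by exists (`|k| * c) => y; rewrite normrM -mulrA ler_wpM2l.
Qed.

Lemma linear_growthN f : linear_growth f -> linear_growth (fun y => - f y).
Proof.
move=> [mf [c cf]]; split; last by exists c => y; rewrite normrN.
exact: measurableT_comp.
Qed.

Lemma linear_growth_norm f : linear_growth f -> linear_growth (fun y => `|f y|).
Proof.
move=> [mf [c cf]]; split; last by exists c => y; rewrite normr_id.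
by apply: measurableT_comp => //; exact: normr_measurable.
Qed.

Lemma linear_growth_ge0 f c : (forall y, `|f y| <= c * (1 + `|y|)) -> 0 <= c.
Proof. by move/(_ 0); rewrite normr0 addr0 mulr1; exact: le_trans. Qed.

Lemma linear_growthM f g :
  linear_growth f -> linear_growth g -> quadratic_growth (fun y => f y * g y).
Proof.
move=> [mf [c cf]] [mg [c' cg]]; split; first exact: measurable_funM.
have c0 := linear_growth_ge0 cf; have c'0 := linear_growth_ge0 cg.
exists (2 * (c * c')) => y; rewrite normrM.
apply: le_trans (ler_pM _ _ (cf y) (cg y)) _ => //.
have := mulr_ge0 (mulr_ge0 c0 c'0) (sqr_ge0 (1 - `|y|)).
rewrite -(real_normK (num_real y)); nra.
Qed.

Lemma linear_growth_quadratic f : linear_growth f -> quadratic_growth f.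
Proof.
move=> lf; suff : quadratic_growth (fun y => f y * 1).
  by under eq_fun do rewrite mulr1.
exact/linear_growthM/linear_growth_cst.
Qed.

Lemma quadratic_growthD f g :
  quadratic_growth f -> quadratic_growth g -> quadratic_growth (fun y => f y + g y).
Proof.
move=> [mf [c cf]] [mg [c' cg]]; split; first exact: measurable_funD.
exists (c + c') => y; rewrite mulrDl (le_trans (ler_normD _ _))//.
exact: lerD.
Qed.

Lemma quadratic_growthZ k f :
  quadratic_growth f -> quadratic_growth (fun y => k * f y).
Proof.
move=> [mf [c cf]]; split; first exact: measurable_funM.
by exists (`|k| * c) => y; rewrite normrM -mulrA ler_wpM2l.
Qed.

Lemma quadratic_growthN f :
  quadratic_growth f -> quadratic_growth (fun y => - f y).
Proof.
move=> [mf [c cf]]; split; last by exists c => y; rewrite normrN.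
exact: measurableT_comp.
Qed.

Lemma linear_growth_sqr f : linear_growth f -> quadratic_growth (fun y => f y ^+ 2).
Proof. by move=> lf; under eq_fun do rewrite expr2; exact: linear_growthM. Qed.

Lemma lipschitz1_continuous f :
  (forall x y, `|f x - f y| <= `|x - y|) -> continuous f.
Proof.
move=> fL x; apply/(@cvgrPdist_lt _ _ _ (nbhs x)) => e e0; near=> z.
by rewrite (le_lt_trans (fL _ _)).
Unshelve. all: by end_near. Qed.

End growth.

Ltac growth := repeat first [ assumption
  | apply: quadratic_growthD | apply: quadratic_growthZ | apply: quadratic_growthN
  | apply: linear_growth_sqr | apply: linear_growthM | apply: linear_growth_quadratic
  | apply: linear_growthD | apply: linear_growthZ | apply: linear_growthN
  | apply: linear_growth_norm | apply: linear_growth_cst | apply: linear_growth_id ].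

Section abs_shift.
Context (R : realType).
Implicit Types (x y s : R).

Lemma normr_cases x : `|x| = x /\ 0 <= x \/ `|x| = - x /\ x <= 0.
Proof.
have [x0|x0] := leP 0 x; first by left; rewrite ger0_norm.
by right; rewrite ltr0_norm// ltW.
Qed.

Lemma abs_shift_cases x x' y : x' <= x ->
  (`|x + y| - `|x' + y|) ^+ 2 = (x - x') ^+ 2 \/ `|x + y| + `|x' + y| = x - x'.
Proof.
move=> xx'; have [[-> h]|[-> h]] := normr_cases (x + y);
  have [[-> h']|[-> h']] := normr_cases (x' + y);
  first [ by right; lra | by left; congr (_ ^+ 2); lra
        | by left; rewrite -sqrrN; congr (_ ^+ 2); lra ].
Qed.

Lemma min_sqr_le_abs_shift x x' y s : x' <= x ->
  Num.min ((x - x') ^+ 2) ((s - (x - x')) ^+ 2) <=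
  (`|x + y| - `|x' + y|) ^+ 2 + (`|x + y| + `|x' + y| - s) ^+ 2.
Proof.
move=> /abs_shift_cases-/(_ y)[<-|<-]; rewrite ge_min.
  by rewrite lerDl sqr_ge0.
by rewrite -[s - _]opprB sqrrN lerDr sqr_ge0 orbT.
Qed.

Lemma abs_shift_clamp_le x x' y : x' <= x ->
  `|(2 * y + x + x') - (`|x + y| - `|x' + y|)| <= `|x + y| + `|x' + y| - (x - x').
Proof.
move=> xx'; have [[-> h]|[-> h]] := normr_cases (x + y);
  have [[-> h']|[-> h']] := normr_cases (x' + y);
  by rewrite ler_norml; apply/andP; split; lra.
Qed.

Lemma sqr_dist_norm_le x y : (`|x| - `|y|) ^+ 2 <= (x - y) ^+ 2.
Proof.
rewrite -[leLHS]real_normK ?num_real// -[leRHS]real_normK ?num_real//.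
by rewrite lerXn2r ?nnegrE// ler_dist_dist.
Qed.

Lemma sqr_le_of_clamp_bounds a del s e j mu :
  a ^+ 2 <= del ^+ 2 -> `|a| <= `|mu| -> `|mu - e| <= s - del ->
  Num.min (del ^+ 2) ((s - del) ^+ 2) <= j -> a ^+ 2 <= 2 * e ^+ 2 + 2 * j.
Proof.
move=> a_del a_mu mu_e; rewrite ge_min => /orP[del_j|sdel_j].
  by have := sqr_ge0 e; have := sqr_ge0 del; lra.
have a_le : `|a| <= `|e| + (s - del).
  apply: le_trans a_mu _; rewrite -[mu](subrK e) addrC.
  by apply: le_trans (ler_normD _ _) _; rewrite lerD2l.
have : a ^+ 2 <= (`|e| + (s - del)) ^+ 2.
  by rewrite -real_normK ?num_real// lerXn2r ?nnegrE// (le_trans _ a_le).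
rewrite -(real_normK (num_real e)).
have := sqr_ge0 (`|e| - (s - del)); nra.
Qed.

End abs_shift.

Definition mean_abs_shift (R : realType) (Q : probability R R) (x : R) :=
  \int[Q]_y `|x + y|.

Definition mean_sqr_shift (R : realType) (Q : probability R R) (x : R) :=
  \int[Q]_y (`|x + y| ^+ 2).

Lemma integrable_quadratic_growth_comp d (T : measurableType d) (R : realType)
    (mu : {finite_measure set T -> \bar R}) (phi : T -> R) (f : R -> R) :
  measurable_fun setT phi -> mu.-integrable setT (EFin \o (fun w => phi w ^+ 2)) ->
  quadratic_growth f -> mu.-integrable setT (EFin \o (f \o phi)).
Proof.
move=> mphi phi_sqr [mf [c cf]].
have gi : mu.-integrable setT (EFin \o (fun w => c * (1 + phi w ^+ 2))).
  have -> : EFin \o (fun w => c * (1 + phi w ^+ 2)) =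
      ((fun=> c%:E) \+ (fun w => c%:E * (phi w ^+ 2)%:E))%E.
    by apply/funext => w /=; rewrite mulrDr mulr1 EFinD EFinM.
  apply: integrableD => //; first exact: finite_measure_integrable_cst.
  exact: integrableZl.
apply: le_integrable gi => //; first exact/measurable_EFinP/measurableT_comp.
by move=> w _ /=; rewrite lee_fin (le_trans (cf _)) ?ler_norm.
Qed.

Section law_integrals.
Context (R : realType) (Q : probability R R).
Hypothesis Q_sqr : Q.-integrable setT (EFin \o (fun y : R => y ^+ 2)).
Implicit Types (f g : R -> R).

Lemma integrable_quadratic_growth f :
  quadratic_growth f -> Q.-integrable setT (EFin \o f).
Proof. exact: integrable_quadratic_growth_comp (@measurable_id _ _ setT) Q_sqr. Qed.

Lemma integral_quadratic_growth f :
  quadratic_growth f -> (\int[Q]_y (f y)%:E = (\int[Q]_y f y)%:E)%E.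
Proof.
move=> qf; rewrite /Rintegral fineK//.
exact: integrable_fin_num (integrable_quadratic_growth qf).
Qed.

Lemma Rintegral_prob_cst c : \int[Q]_y c = c.
Proof. by rewrite Rintegral_cst// (_ : fine (Q setT) = 1) ?mulr1// probability_setT. Qed.

Lemma Rintegral_comb F f g k1 k2 k0 :
  quadratic_growth f -> quadratic_growth g ->
  (forall y, F y = k1 * f y + k2 * g y + k0) ->
  \int[Q]_y F y = k1 * \int[Q]_y f y + k2 * \int[Q]_y g y + k0.
Proof.
move=> qf qg FE; rewrite (eq_Rintegral _ (fun y _ => FE y)).
rewrite !RintegralD ?RintegralZl ?Rintegral_prob_cst//.
all: try exact: finite_measure_integrable_cst.
all: by apply: integrable_quadratic_growth; growth.
Qed.

Lemma le_Rintegral_growth f g : quadratic_growth f -> quadratic_growth g ->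
  (forall y, f y <= g y) -> \int[Q]_y f y <= \int[Q]_y g y.
Proof.
by move=> qf qg fg; apply: le_Rintegral => //; exact: integrable_quadratic_growth.
Qed.

Lemma variance_le_pairwise (a h g : R -> R) c :
  linear_growth a -> linear_growth h -> quadratic_growth g ->
  (forall x x', (a x - a x') ^+ 2 <= c * (g x + g x' - 2 * (h x * h x'))) ->
  \int[Q]_x (a x ^+ 2) - (\int[Q]_x a x) ^+ 2 <=
  c * (\int[Q]_x g x - (\int[Q]_x h x) ^+ 2).
Proof.
move=> la lh qg pairwise.
set A2 := \int[Q]_x (a x ^+ 2); set A1 := \int[Q]_x a x.
set G1 := \int[Q]_x g x; set H1 := \int[Q]_x h x.
have inner x' : A2 - 2 * a x' * A1 + a x' ^+ 2 <= c * (G1 + g x' - 2 * (h x' * H1)).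
  have ineq : \int[Q]_x ((a x - a x') ^+ 2) <=
              \int[Q]_x (c * (g x + g x' - 2 * (h x * h x'))).
    by apply: (le_Rintegral_growth _ _ (pairwise^~ x')); growth.
  have eL x : (a x - a x') ^+ 2 = 1 * a x ^+ 2 + (- (2 * a x')) * a x + a x' ^+ 2.
    by ring.
  have eR x : c * (g x + g x' - 2 * (h x * h x')) =
              c * g x + (- (2 * c * h x')) * h x + c * g x'.
    by ring.
  rewrite (Rintegral_comb _ _ eL) ?(Rintegral_comb _ _ eR) in ineq; try growth.
  by rewrite -/A2 -/A1 -/G1 -/H1 in ineq; lra.
have outer : \int[Q]_x (A2 - 2 * a x * A1 + a x ^+ 2) <=
             \int[Q]_x (c * (G1 + g x - 2 * (h x * H1))).
  by apply: (le_Rintegral_growth _ _ inner); growth.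
have eL x : A2 - 2 * a x * A1 + a x ^+ 2 = 1 * a x ^+ 2 + (- (2 * A1)) * a x + A2.
  by ring.
have eR x : c * (G1 + g x - 2 * (h x * H1)) = c * g x + (- (2 * c * H1)) * h x + c * G1.
  by ring.
rewrite (Rintegral_comb _ _ eL) ?(Rintegral_comb _ _ eR) -/A2 -/A1 -/G1 -/H1 in outer;
  try growth.
lra.
Qed.

Local Notation H := (mean_abs_shift Q).
Local Notation G := (mean_sqr_shift Q).

Lemma mean_abs_shift_lipschitz x x' : `|H x - H x'| <= `|x - x'|.
Proof.
rewrite /mean_abs_shift -RintegralB//; try by apply: integrable_quadratic_growth; growth.
apply: le_trans (le_normr_Rintegral _ _) _ => //.
  by apply: integrable_quadratic_growth; growth.
rewrite -[leRHS]Rintegral_prob_cst; apply: le_Rintegral_growth => [||y]; try growth.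
by rewrite (_ : x - x' = (x + y) - (x' + y)) ?ler_dist_dist//; ring.
Qed.

Lemma linear_growth_mean_abs_shift : linear_growth H.
Proof.
split.
  apply: continuous_measurable_fun; apply: lipschitz1_continuous.
  exact: mean_abs_shift_lipschitz.
exists (1 + H 0) => x.
have H_ge0 x1 : 0 <= H x1 by apply: Rintegral_ge0.
have : H x <= H 0 + `|x|.
  by have := mean_abs_shift_lipschitz x 0; rewrite subr0 ler_distl => /andP[_].
by rewrite (ger0_norm (H_ge0 x)); have := mulr_ge0 (H_ge0 0) (normr_ge0 x); lra.
Qed.

Lemma quadratic_growth_mean_sqr_shift : quadratic_growth G.
Proof.
have GE x : G x = x ^+ 2 + 2 * \int[Q]_y y * x + \int[Q]_y (y ^+ 2).
  have e y : `|x + y| ^+ 2 = 1 * y ^+ 2 + (2 * x) * y + x ^+ 2.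
    by rewrite real_normK ?num_real//; ring.
  by rewrite /mean_sqr_shift (Rintegral_comb _ _ e); [ring|growth|growth].
by rewrite (funext GE); growth.
Qed.

Lemma min_sqr_le_mean_sqr_shift x x' : x' <= x ->
  Num.min ((x - x') ^+ 2) ((H x + H x' - (x - x')) ^+ 2) <=
  2 * G x + 2 * G x' - (H x + H x') ^+ 2.
Proof.
move=> xx'; set S := H x + H x'.
have e1 y : (`|x + y| - `|x' + y|) ^+ 2 + (`|x + y| + `|x' + y| - S) ^+ 2 =
    2 * (`|x + y| ^+ 2 + `|x' + y| ^+ 2) + (- (2 * S)) * (`|x + y| + `|x' + y|) + S ^+ 2.
  by ring.
have e2 y : `|x + y| ^+ 2 + `|x' + y| ^+ 2 = 1 * `|x + y| ^+ 2 + 1 * `|x' + y| ^+ 2 + 0.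
  by ring.
have e3 y : `|x + y| + `|x' + y| = 1 * `|x + y| + 1 * `|x' + y| + 0.
  by ring.
have -> : 2 * G x + 2 * G x' - S ^+ 2 = \int[Q]_y
    ((`|x + y| - `|x' + y|) ^+ 2 + (`|x + y| + `|x' + y| - S) ^+ 2).
  rewrite (Rintegral_comb _ _ e1) ?(Rintegral_comb _ _ e2) ?(Rintegral_comb _ _ e3);
    try growth.
  by rewrite /S /mean_sqr_shift /mean_abs_shift; ring.
rewrite -[leLHS]Rintegral_prob_cst; apply: le_Rintegral_growth => [||y]; try growth.
exact: min_sqr_le_abs_shift.
Qed.

Lemma mean_abs_shift_clamp_le x x' : x' <= x ->
  `|2 * \int[Q]_y y + x + x' - (H x - H x')| <= H x + H x' - (x - x').
Proof.
move=> xx'.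
have e1 y : 2 * y + x + x' - (`|x + y| - `|x' + y|) =
    2 * y + (-1) * (`|x + y| - `|x' + y|) + (x + x').
  by ring.
have e2 y : `|x + y| - `|x' + y| = 1 * `|x + y| + (-1) * `|x' + y| + 0.
  by ring.
have e3 y : `|x + y| + `|x' + y| - (x - x') = 1 * `|x + y| + 1 * `|x' + y| + (x' - x).
  by ring.
have -> : 2 * \int[Q]_y y + x + x' - (H x - H x') =
    \int[Q]_y (2 * y + x + x' - (`|x + y| - `|x' + y|)).
  rewrite (Rintegral_comb _ _ e1) ?(Rintegral_comb _ _ e2); try growth.
  by rewrite /mean_abs_shift; ring.
have -> : H x + H x' - (x - x') = \int[Q]_y (`|x + y| + `|x' + y| - (x - x')).
  by rewrite (Rintegral_comb _ _ e3) /mean_abs_shift; [ring|growth|growth].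
apply: le_trans (le_normr_Rintegral _ _) _ => //.
  by apply: integrable_quadratic_growth; growth.
apply: le_Rintegral_growth => [||y]; try growth.
exact: abs_shift_clamp_le.
Qed.

Lemma sqr_dist_abs_shift_le x x' :
  (`|x + \int[Q]_y y| - `|x' + \int[Q]_y y|) ^+ 2 <=
  4 * (G x + G x' - 2 * (H x * H x')).
Proof.
wlog xx' : x x' / x' <= x.
  move=> wlog; have [|/ltW x'x] := leP x' x; first exact: wlog.
  by have := wlog x' x x'x; lra.
set m := \int[Q]_y y.
have -> : 4 * (G x + G x' - 2 * (H x * H x')) =
    2 * (H x - H x') ^+ 2 + 2 * (2 * G x + 2 * G x' - (H x + H x') ^+ 2).
  by ring.
apply: (sqr_le_of_clamp_bounds (del := x - x') (s := H x + H x') (mu := 2 * m + x + x')).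
- have := sqr_dist_norm_le (x + m) (x' + m).
  by rewrite (_ : x + m - (x' + m) = x - x')//; ring.
- by rewrite (_ : 2 * m + x + x' = (x + m) + (x' + m)) ?ler_dist_normD//; ring.
- exact: mean_abs_shift_clamp_le.
- exact: min_sqr_le_mean_sqr_shift.
Qed.

End law_integrals.

Lemma Lfun_normr d (T : measurableType d) (R : realType)
    (mu : {measure set T -> \bar R}) p (f : T -> R) :
  f \in Lfun mu p -> (fun x => `|f x|) \in Lfun mu p.
Proof.
case/andP; rewrite !inE/= => mf finf; apply/andP; split.
  by rewrite inE/=; exact: measurableT_comp.
rewrite inE/=/finite_norm.
under [X in ('N[_]__[X])%E]eq_fun => x do rewrite -abse_EFin.
by rewrite Lnorm_abse.
Qed.

Section random_variables.
Context d (T : measurableType d) (R : realType) (P : probability T R).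

Lemma integrable_sqr_distribution (X : {RV P >-> R}) :
  (X : T -> R) \in Lfun P 2%:E ->
  (distribution P X).-integrable setT (EFin \o (fun y : R => y ^+ 2)).
Proof.
move=> X2; have mX : measurable_fun setT X by exact: measurable_funP.
have msqr : measurable_fun setT (EFin \o (fun y : R => y ^+ 2)).
  by apply/measurable_EFinP; exact: measurable_funX.
have := integrable_pushforward mX msqr (mu := P) (D := setT).
by rewrite preimage_setT; apply => //; exact: Lfun2_integrable_sqr.
Qed.

Lemma expectation_quadratic_growth (X : {RV P >-> R}) (f : R -> R) :
  (X : T -> R) \in Lfun P 2%:E -> quadratic_growth f ->
  ('E_P[f \o X] = (\int[distribution P X]_x f x)%R%:E)%E.
Proof.
move=> X2 qf; rewrite unlock.
rewrite -(integral_quadratic_growth (integrable_sqr_distribution X2) qf).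
rewrite (integral_distribution (f := EFin \o f)) //.
  by apply/measurable_EFinP; case: qf.
exact: integrable_quadratic_growth_comp (Lfun2_integrable_sqr X2) qf.
Qed.

Lemma fine_expectation (X : {RV P >-> R}) : (X : T -> R) \in Lfun P 2%:E ->
  fine 'E_P[X]%E = \int[distribution P X]_x x.
Proof.
by move=> X2; rewrite -[X in 'E_P[X]%E]/(id \o X) expectation_quadratic_growth//; growth.
Qed.

Lemma variance_abs_shift (X : {RV P >-> R}) (c : R) :
  (X : T -> R) \in Lfun P 2%:E ->
  'V_P[fun w => `|X w + c|%R]%E = (\int[distribution P X]_x (`|x + c| ^+ 2) -
                                 (\int[distribution P X]_x `|x + c|) ^+ 2)%:E.
Proof.
move=> X2; rewrite varianceE; last first.
  apply/Lfun_normr/rpredD => //; first exact: lee1n.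
  by move=> ?; exact: Lfun_cst.
rewrite (expectation_quadratic_growth (f := fun x => `|x + c| ^+ 2) X2); last by growth.
rewrite (expectation_quadratic_growth (f := fun x => `|x + c|) X2); last by growth.
by rewrite -EFin_expe -EFinB.
Qed.

Lemma variance_abs_add (X Y : {RV P >-> R}) : independent_RV2 X Y ->
  (X : T -> R) \in Lfun P 2%:E -> (Y : T -> R) \in Lfun P 2%:E ->
  'V_P[fun w => `|X w + Y w|%R]%E =
  (\int[distribution P X]_x mean_sqr_shift (distribution P Y) x -
   (\int[distribution P X]_x mean_abs_shift (distribution P Y) x) ^+ 2)%:E.
Proof.
move=> iXY X2 Y2.
have M_sqr := integrable_sqr_distribution X2.
have Q_sqr := integrable_sqr_distribution Y2.
have E_sum (h : R -> R) : measurable_fun setT h -> (forall t, 0 <= h t) ->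
    (forall x, quadratic_growth (fun y => h (x + y))) ->
    quadratic_growth (fun x => \int[distribution P Y]_y h (x + y)) ->
    'E_P[fun w => h (X w + Y w)%R]%E =
    (\int[distribution P X]_x \int[distribution P Y]_y h (x + y))%:E.
  move=> mh h0 qh qH; rewrite unlock.
  rewrite (ge0_integral_independent (f := fun z => (h (z.1 + z.2))%:E) iXY) /=;
    last 2 first.
  - apply/measurable_EFinP; apply: measurableT_comp => //.
    by apply: measurable_funD; [exact: measurable_fst|exact: measurable_snd].
  - by move=> z; rewrite lee_fin.
  under eq_integral do rewrite (integral_quadratic_growth Q_sqr (qh _)).
  by rewrite -(integral_quadratic_growth M_sqr qH).
rewrite varianceE; last first.
  by apply/Lfun_normr/rpredD => //; exact: lee1n.
rewrite (E_sum (fun t => `|t| ^+ 2)) ?(E_sum (fun t => `|t|)) -?EFin_expe -?EFinB//.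
- by move=> x; growth.
- exact: linear_growth_quadratic (linear_growth_mean_abs_shift Q_sqr).
- by apply: measurable_funX; exact: normr_measurable.
- by move=> x; growth.
- exact: quadratic_growth_mean_sqr_shift.
Qed.

End random_variables.

Lemma variance_abs_add_mean_le d (T : measurableType d) (R : realType)
    (P : probability T R) (X Y : {RV P >-> R}) :
  independent_RV2 X Y ->
  (X : T -> R) \in Lfun P 2%:E -> (Y : T -> R) \in Lfun P 2%:E ->
  ('V_P[fun w => `|X w + fine 'E_P[Y]|%R] * (4^-1)%:E
     <= 'V_P[fun w => `|X w + Y w|%R])%E.
Proof.
move=> iXY X2 Y2; have Q_sqr := integrable_sqr_distribution Y2.
rewrite variance_abs_shift// variance_abs_add// fine_expectation// -EFinM lee_fin.
have := variance_le_pairwise (integrable_sqr_distribution X2)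
  (a := fun x => `|x + \int[distribution P Y]_y y|) (c := 4) ltac:(growth)
  (linear_growth_mean_abs_shift Q_sqr) (quadratic_growth_mean_sqr_shift Q_sqr)
  (sqr_dist_abs_shift_le Q_sqr).
lra.
Qed.

Theorem lemma5 (R : realType) :
  exists K0 : R, 0 < K0 <= 4 /\
    forall (d : measure_display) (T : measurableType d) (P : probability T R)
      (X Y : {RV P >-> R}),
      independent_RV2 X Y ->
      (X : T -> R) \in Lfun P 2%:E -> (Y : T -> R) \in Lfun P 2%:E ->
      (maxe 'V_P[fun w => `|X w + fine 'E_P[Y]|%R]
            'V_P[fun w => `|Y w + fine 'E_P[X]|%R] * (K0^-1)%:E
        <= 'V_P[fun w => `|X w + Y w|%R])%E.
Proof.
exists 4; split; first by rewrite ltr0n lexx.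
move=> d T P X Y iXY X2 Y2.
have VX := variance_abs_add_mean_le iXY X2 Y2.
have VY := variance_abs_add_mean_le (independent_RV2_sym iXY) Y2 X2.
have addC : (fun w => `|Y w + X w|%R) = (fun w => `|X w + Y w|%R).
  by apply/funext => w; rewrite addrC.
rewrite addC in VY.
by rewrite maxEle; case: ifP.
Qed.
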